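(* For all $(k,l,m)\in\mathbb{Z}^3$, $$R(k,l,m;a,b,c;x)=\frac{c(c+1)}{(a+1)(b+1)x(1-x)}\,Q(k-1,l-1,m-1;a+1,b+1,c+1;x).$$
   Context: $F(a,b,c;x)=\sum_{n\ge0}\frac{(a)_n(b)_n}{(c)_n n!}x^n$, $(\alpha)_n=\Gamma(\alpha+n)/\Gamma(\alpha)$. Standing assumption: $a,b,c-a,c-b,c,c-a-b,a-b\notin\mathbb{Z}$. For each $(k,l,m)\in\mathbb{Z}^3$, $Q(k,l,m;a,b,c;x)$ and $R(k,l,m;a,b,c;x)$ denote the unique rational functions of $a,b,c,x$ such that $F(a+k,b+l,c+m;x)=Q\cdot F(a+1,b+1,c+1;x)+R\cdot F(a,b,c;x)$; $Q(k,l,m;\alpha_1,\alpha_2,\alpha_3;\beta)$ denotes substitution of $a,b,c,x$ by $\alpha_1,\alpha_2,\alpha_3,\beta$. *)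

From Stdlib Require Import Reals ZArith List.
From Coquelicot Require Import Coquelicot.
Open Scope R_scope.

Fixpoint poch (alpha : R) (n : nat) : R :=
  match n with
  | O => 1
  | S n' => poch alpha n' * (alpha + INR n')
  end.

Definition hypF (a b c x : R) : R :=
  Series (fun n => poch a n * poch b n / (poch c n * INR (fact n)) * x ^ n).

Definition notint (y : R) : Prop := forall z : Z, y <> IZR z.

Definition standing (a b c : R) : Prop :=
  notint a /\ notint b /\ notint (c - a) /\ notint (c - b) /\
  notint c /\ notint (c - a - b) /\ notint (a - b).

(* Real polynomials in the four variables (a,b,c,x), as finite lists of
   monomials  coef * a^i * b^j * c^k * x^l. *)
Definition poly4 := list (R * (nat * nat * nat * nat)).

Definition peval (p : poly4) (a b c x : R) : R :=
  fold_right (fun (m : R * (nat * nat * nat * nat)) acc =>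
    match m with (r, (i, j, k, l)) => r * a ^ i * b ^ j * c ^ k * x ^ l + acc end)
    0 p.

Record ratfun := Ratfun { rnum : poly4; rden : poly4 }.

Definition rvalid (f : ratfun) : Prop :=
  exists a b c x, peval (rden f) a b c x <> 0.

Definition rdefined (f : ratfun) (a b c x : R) : Prop :=
  peval (rden f) a b c x <> 0.

Definition reval (f : ratfun) (a b c x : R) : R :=
  peval (rnum f) a b c x / peval (rden f) a b c x.

(* (Q,R) are the rational functions of the contiguous relation
     F(a+k,b+l,c+m;x) = Q * F(a+1,b+1,c+1;x) + R * F(a,b,c;x)
   i.e. Q(k,l,m;a,b,c;x) and R(k,l,m;a,b,c;x). *)
Definition contiguous (k l m : Z) (Qf Rf : ratfun) : Prop :=
  rvalid Qf /\ rvalid Rf /\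
  forall a b c x : R,
    standing a b c -> -1 < x < 1 ->
    rdefined Qf a b c x -> rdefined Rf a b c x ->
    hypF (a + IZR k) (b + IZR l) (c + IZR m) x =
      reval Qf a b c x * hypF (a + 1) (b + 1) (c + 1) x + reval Rf a b c x * hypF a b c x.

From Stdlib Require Import Reals ZArith.
From Coquelicot Require Import Coquelicot.
From Stdlib Require Import List Lia Lra Classical FinFun.
Import ListNotations.
Open Scope R_scope.

(* Eliminating F(a+k,b+l,c+m) between the two contiguous relations, and then
   F(a,b,c) by the three-term relation
     c(c+1) F = (a+1)(b+1) x(1-x) F(a+2,b+2,c+2) + (c+1)(c-(a+b+1)x) F(a+1,b+1,c+1)
   (the hypergeometric equation), leaves a relation U F(a+1,b+1,c+1) + V F(a+2,b+2,c+2) = 0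
   whose coefficients are polynomials in x, and V is, up to nonzero denominators, the
   numerator of R - c(c+1)/((a+1)(b+1)x(1-x)) Q'. When A, B, C, C-A, C-B, A-B are not
   integers, F(A,B,C) and F(A+1,B+1,C+1) are independent over the polynomials: after
   clearing denominators the relation between their Taylor coefficients is a polynomial
   identity in the index, and evaluating it at -A and -B kills the top coefficients.
   Hence V = 0 at generic points, and since everything is polynomial in each of
   a, b, c, x separately, the identity extends to all points. *)

Fixpoint horner (p : list R) (x : R) : R :=
  match p with nil => 0 | c :: p' => c + x * horner p' x end.

Definition is_poly (f : R -> R) : Prop := exists p, forall x, f x = horner p x.

Fixpoint poly_add (p q : list R) : list R :=
  match p, q with
  | nil, _ => q
  | _, nil => p
  | c :: p', d :: q' => (c + d) :: poly_add p' q'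
  end.

Definition poly_scale (c : R) (p : list R) : list R := map (Rmult c) p.

Fixpoint poly_mul (p q : list R) : list R :=
  match p with nil => nil | c :: p' => poly_add (poly_scale c q) (0 :: poly_mul p' q) end.

Lemma horner_add p q x : horner (poly_add p q) x = horner p x + horner q x.
Proof.
  revert q; induction p as [|c p IH]; intros [|d q]; simpl; try lra.
  rewrite IH; ring.
Qed.

Lemma length_poly_add p q : (length (poly_add p q) <= Nat.max (length p) (length q))%nat.
Proof.
  revert q; induction p as [|c p IH]; intros [|d q]; simpl; try lia.
  specialize (IH q); lia.
Qed.

Lemma horner_scale c p x : horner (poly_scale c p) x = c * horner p x.
Proof. induction p as [|d p IH]; simpl; [ring|rewrite IH; ring]. Qed.

Lemma horner_mul p q x : horner (poly_mul p q) x = horner p x * horner q x.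
Proof.
  induction p as [|c p IH]; simpl; [ring|].
  rewrite horner_add, horner_scale; simpl; rewrite IH; ring.
Qed.

Lemma is_poly_ext f g : is_poly f -> (forall x, f x = g x) -> is_poly g.
Proof. intros [p Hp] E; exists p; intros x; rewrite <- E; auto. Qed.

Lemma is_poly_const c : is_poly (fun _ => c).
Proof. exists [c]; intros; simpl; ring. Qed.

Lemma is_poly_id : is_poly (fun x => x).
Proof. exists [0; 1]; intros; simpl; ring. Qed.

Lemma is_poly_add f g : is_poly f -> is_poly g -> is_poly (fun x => f x + g x).
Proof. intros [p Hp] [q Hq]; exists (poly_add p q); intros; rewrite horner_add, Hp, Hq; auto. Qed.

Lemma is_poly_mul f g : is_poly f -> is_poly g -> is_poly (fun x => f x * g x).
Proof. intros [p Hp] [q Hq]; exists (poly_mul p q); intros; rewrite horner_mul, Hp, Hq; auto. Qed.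

Lemma is_poly_opp f : is_poly f -> is_poly (fun x => - f x).
Proof.
  intros Hf; apply is_poly_ext with (fun x => -1 * f x); [|intros; ring].
  apply is_poly_mul; [apply is_poly_const|auto].
Qed.

Lemma is_poly_sub f g : is_poly f -> is_poly g -> is_poly (fun x => f x - g x).
Proof. intros; apply is_poly_add; [|apply is_poly_opp]; auto. Qed.

Lemma is_poly_pow f n : is_poly f -> is_poly (fun x => f x ^ n).
Proof. intros Hf; induction n; simpl; [apply is_poly_const|apply is_poly_mul; auto]. Qed.

Lemma is_poly_shift f t : is_poly f -> is_poly (fun x => f (x + t)).
Proof.
  intros [p Hp]; apply is_poly_ext with (fun x => horner p (x + t)); [|intros; rewrite Hp; auto].
  clear Hp; induction p as [|c p IH]; simpl; [apply is_poly_const|].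
  apply is_poly_add; [apply is_poly_const|apply is_poly_mul; auto].
  apply is_poly_add; [apply is_poly_id|apply is_poly_const].
Qed.

Ltac is_poly_tac := repeat first
  [ apply is_poly_add | apply is_poly_mul | apply is_poly_sub | apply is_poly_opp
  | apply is_poly_pow | apply is_poly_id | apply is_poly_const ].

Fixpoint sum_lt (n : nat) (f : nat -> R) : R :=
  match n with O => 0 | S n' => sum_lt n' f + f n' end.

Lemma sum_lt_ext n f g : (forall i, (i < n)%nat -> f i = g i) -> sum_lt n f = sum_lt n g.
Proof. induction n; intros H; simpl; auto. rewrite IHn, H; auto. Qed.

Lemma sum_lt_eq0 n f : (forall i, (i < n)%nat -> f i = 0) -> sum_lt n f = 0.
Proof.
  intros H; rewrite (sum_lt_ext n f (fun _ => 0)); auto.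
  induction n; simpl; auto; rewrite IHn; auto; ring.
Qed.

Lemma sum_lt_S n f : sum_lt (S n) f = sum_lt n f + f n.
Proof. reflexivity. Qed.

Lemma sum_lt_Sl n f : sum_lt (S n) f = f O + sum_lt n (fun i => f (S i)).
Proof. induction n; simpl in *; [ring|rewrite IHn; ring]. Qed.

Lemma sum_lt_add_range n m f : sum_lt (n + m) f = sum_lt n f + sum_lt m (fun i => f (n + i)%nat).
Proof.
  induction m; simpl; [rewrite Nat.add_0_r; ring|].
  rewrite Nat.add_succ_r; simpl; rewrite IHm; ring.
Qed.

Lemma sum_lt_mulr n f c : sum_lt n f * c = sum_lt n (fun i => f i * c).
Proof. induction n; simpl; [ring|rewrite <- IHn; ring]. Qed.

Lemma sum_lt_mull n f c : c * sum_lt n f = sum_lt n (fun i => c * f i).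
Proof. induction n; simpl; [ring|rewrite <- IHn; ring]. Qed.

Lemma is_poly_sum_lt n (F : nat -> R -> R) :
  (forall i, is_poly (F i)) -> is_poly (fun x => sum_lt n (fun i => F i x)).
Proof. intros H; induction n; simpl; [apply is_poly_const|apply is_poly_add; auto]. Qed.

Lemma horner_sub_root p r : exists q, (length q <= pred (length p))%nat /\
  forall x, horner p x - horner p r = (x - r) * horner q x.
Proof.
  induction p as [|c p [q [Hlen Hq]]].
  - exists nil; split; simpl; [lia|intros; ring].
  - exists (poly_add p (poly_scale r q)); split.
    + pose proof (length_poly_add p (poly_scale r q)) as H.
      unfold poly_scale in *; rewrite length_map in H; simpl; lia.
    + intros x; simpl; rewrite horner_add, horner_scale.
      replace (c + x * horner p x - (c + r * horner p r)) with
        ((x - r) * horner p x + r * (horner p x - horner p r)) by ring.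
      rewrite Hq; ring.
Qed.

Lemma horner_eq0_of_nth p : (forall j, nth j p 0 = 0) -> forall x, horner p x = 0.
Proof.
  induction p as [|c p IH]; intros H x; simpl; [auto|].
  rewrite IH; [|intros j; apply (H (S j))].
  specialize (H O); simpl in H; rewrite H; ring.
Qed.

Definition infinite (A : R -> Prop) : Prop := forall L : list R, exists s, A s /\ ~ In s L.

Lemma infinite_remove A L' : infinite A -> infinite (fun s => A s /\ ~ In s L').
Proof.
  intros H L; destruct (H (L' ++ L)) as [s [Hs Hn]].
  exists s; rewrite in_app_iff in Hn; tauto.
Qed.

Lemma infinite_of_injective (A : R -> Prop) (u : nat -> R) :
  Injective u -> (forall n, A (u n)) -> infinite A.
Proof.
  intros Hinj HA L.
  destruct (classic (exists n, ~ In (u n) L)) as [[n Hn]|Hall]; [exists (u n); auto|].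
  exfalso; assert (Hincl : incl (map u (seq 0 (S (length L)))) L).
  { intros y Hy; apply in_map_iff in Hy as [n [<- _]].
    apply NNPP; intros Hn; apply Hall; exists n; auto. }
  apply NoDup_incl_length in Hincl; [rewrite length_map, length_seq in Hincl; lia|].
  apply Injective_map_NoDup; [auto|apply seq_NoDup].
Qed.

Lemma infinite_interval l r : l < r -> infinite (fun x => l < x < r).
Proof.
  intros Hlr; apply (infinite_of_injective _ (fun n => l + (r - l) / (INR n + 2))).
  - intros n m E; apply INR_eq.
    assert (INR n + 2 <> 0 /\ INR m + 2 <> 0) as [] by (pose proof (pos_INR n); pose proof (pos_INR m); lra).
    apply (Rmult_eq_reg_l (r - l)); [|lra].
    apply (f_equal (fun t => (t - l) * (INR n + 2) * (INR m + 2))) in E.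
    field_simplify in E; auto; lra.
  - intros n; pose proof (pos_INR n).
    assert (0 < (r - l) / (INR n + 2) < r - l); [split|lra].
    + apply Rdiv_lt_0_compat; lra.
    + apply Rlt_div_l; nra.
Qed.

Lemma infinite_nat_from k : infinite (fun x => exists n, (k <= n)%nat /\ x = INR n).
Proof.
  apply (infinite_of_injective _ (fun n => INR (k + n))).
  - intros n m E; apply INR_eq in E; lia.
  - intros n; exists (k + n)%nat; split; [lia|auto].
Qed.

Lemma horner_eq0_on_infinite p A :
  infinite A -> (forall s, A s -> horner p s = 0) -> forall x, horner p x = 0.
Proof.
  remember (length p) as n eqn:En; revert p En A; induction n as [n IH] using lt_wf_ind.
  intros p En A HA H0 x.
  destruct p as [|c p]; [reflexivity|].
  destruct (HA nil) as [r [Hr _]].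
  destruct (horner_sub_root (c :: p) r) as [q [Hlen Hq]].
  assert (Hq0 : forall y, horner q y = 0).
  { apply (IH (length q) ltac:(simpl in En, Hlen; lia) q eq_refl _ (infinite_remove A [r] HA)).
    intros s [Hs Hsr]; assert (s - r <> 0) by (intro; apply Hsr; left; lra).
    apply (Rmult_eq_reg_l (s - r)); auto.
    rewrite <- Hq, !H0; auto; ring. }
  specialize (Hq x); rewrite Hq0, (H0 r Hr) in Hq; lra.
Qed.

Lemma is_poly_eq0_on_infinite f A :
  is_poly f -> infinite A -> (forall s, A s -> f s = 0) -> forall x, f x = 0.
Proof.
  intros [p Hp] HA H x; rewrite Hp.
  apply (horner_eq0_on_infinite p A HA); intros s Hs; rewrite <- Hp; auto.
Qed.

Lemma infinite_nonroots A g y0 :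
  infinite A -> is_poly g -> g y0 <> 0 -> infinite (fun s => A s /\ g s <> 0).
Proof.
  intros HA Hg Hy L; apply NNPP; intros Hno; apply Hy.
  apply (is_poly_eq0_on_infinite g (fun s => A s /\ ~ In s L)); auto.
  - apply infinite_remove; auto.
  - intros s [Hs Hn]; apply NNPP; intros Hgs; apply Hno; exists s; auto.
Qed.

Lemma is_poly_eq0_generic f g A y0 :
  is_poly f -> is_poly g -> infinite A -> g y0 <> 0 ->
  (forall y, A y -> g y <> 0 -> f y = 0) -> forall y, f y = 0.
Proof.
  intros Hf Hg HA Hy0 H.
  apply (is_poly_eq0_on_infinite f _ Hf (infinite_nonroots A g y0 HA Hg Hy0)).
  intros s []; auto.
Qed.

Definition sep_poly (f : R -> R -> R -> R -> R) : Prop :=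
  (forall b c x, is_poly (fun a => f a b c x)) /\ (forall a c x, is_poly (fun b => f a b c x)) /\
  (forall a b x, is_poly (fun c => f a b c x)) /\ (forall a b c, is_poly (fun x => f a b c x)).

Lemma sep_poly_peval p : sep_poly (peval p).
Proof.
  induction p as [|[r [[[i j] k] l]] p [H1 [H2 [H3 H4]]]];
    repeat split; intros; simpl; is_poly_tac; auto.
Qed.

Lemma sep_poly_const r : sep_poly (fun _ _ _ _ => r).
Proof. repeat split; intros; apply is_poly_const. Qed.

Lemma sep_poly_a : sep_poly (fun a _ _ _ => a).
Proof. repeat split; intros; first [apply is_poly_id | apply is_poly_const]. Qed.

Lemma sep_poly_b : sep_poly (fun _ b _ _ => b).
Proof. repeat split; intros; first [apply is_poly_id | apply is_poly_const]. Qed.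

Lemma sep_poly_c : sep_poly (fun _ _ c _ => c).
Proof. repeat split; intros; first [apply is_poly_id | apply is_poly_const]. Qed.

Lemma sep_poly_x : sep_poly (fun _ _ _ x => x).
Proof. repeat split; intros; first [apply is_poly_id | apply is_poly_const]. Qed.

Lemma sep_poly_add f g : sep_poly f -> sep_poly g -> sep_poly (fun a b c x => f a b c x + g a b c x).
Proof. intros (?&?&?&?) (?&?&?&?); repeat split; intros; apply is_poly_add; auto. Qed.

Lemma sep_poly_sub f g : sep_poly f -> sep_poly g -> sep_poly (fun a b c x => f a b c x - g a b c x).
Proof. intros (?&?&?&?) (?&?&?&?); repeat split; intros; apply is_poly_sub; auto. Qed.

Lemma sep_poly_mul f g : sep_poly f -> sep_poly g -> sep_poly (fun a b c x => f a b c x * g a b c x).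
Proof. intros (?&?&?&?) (?&?&?&?); repeat split; intros; apply is_poly_mul; auto. Qed.

Lemma sep_poly_shift f : sep_poly f -> sep_poly (fun a b c x => f (a + 1) (b + 1) (c + 1) x).
Proof.
  intros (H1&H2&H3&H4); repeat split; intros; auto.
  - apply (is_poly_shift (fun a => f a (b + 1) (c + 1) x)); auto.
  - apply (is_poly_shift (fun b => f (a + 1) b (c + 1) x)); auto.
  - apply (is_poly_shift (fun c => f (a + 1) (b + 1) c x)); auto.
Qed.

Ltac sep_poly_tac := repeat first
  [ apply sep_poly_sub | apply sep_poly_add | apply sep_poly_mul | apply sep_poly_const
  | apply sep_poly_a | apply sep_poly_b | apply sep_poly_c | apply sep_poly_x | apply sep_poly_peval
  | apply (sep_poly_shift (fun a b c x => peval _ a b c x)); apply sep_poly_peval ].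

Lemma sep_poly_mul_neq0 f g a0 b0 c0 x0 a1 b1 c1 x1 :
  sep_poly f -> sep_poly g -> f a0 b0 c0 x0 <> 0 -> g a1 b1 c1 x1 <> 0 ->
  exists a b c x, f a b c x * g a b c x <> 0.
Proof.
  intros (F1&F2&F3&F4) (G1&G2&G3&G4) Hf Hg.
  pose proof (infinite_interval 0 1 ltac:(lra)) as I.
  destruct (infinite_nonroots _ _ _ (infinite_nonroots _ _ _ I (F1 b0 c0 x0) Hf) (G1 b1 c1 x1) Hg nil)
    as [a [[[_ Ha1] Ha2] _]].
  destruct (infinite_nonroots _ _ _ (infinite_nonroots _ _ _ I (F2 a c0 x0) Ha1) (G2 a c1 x1) Ha2 nil)
    as [b [[[_ Hb1] Hb2] _]].
  destruct (infinite_nonroots _ _ _ (infinite_nonroots _ _ _ I (F3 a b x0) Hb1) (G3 a b x1) Hb2 nil)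
    as [c [[[_ Hc1] Hc2] _]].
  destruct (infinite_nonroots _ _ _ (infinite_nonroots _ _ _ I (F4 a b c) Hc1) (G4 a b c) Hc2 nil)
    as [x [[[_ Hx1] Hx2] _]].
  exists a, b, c, x; apply Rmult_integral_contrapositive; auto.
Qed.

Lemma notint_neq0 y : notint y -> y <> 0.
Proof. intros H E; apply (H 0%Z); auto. Qed.

Lemma notint_opp y : notint y -> notint (- y).
Proof. intros H z E; apply (H (- z)%Z); rewrite opp_IZR; lra. Qed.

Lemma notint_add1 y : notint y -> notint (y + 1).
Proof. intros H z E; apply (H (z - 1)%Z); rewrite minus_IZR; simpl; lra. Qed.

Lemma notint_add_nat y n : notint y -> y + INR n <> 0.
Proof.
  intros H E; apply (H (- Z.of_nat n)%Z); rewrite opp_IZR, <- INR_IZR_INZ; lra.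
Qed.

Lemma notint_sub_nat y n : notint y -> y - INR n <> 0.
Proof. intros H E; apply (H (Z.of_nat n)); rewrite <- INR_IZR_INZ; lra. Qed.

Lemma notint_unit_interval y : 0 < y < 1 -> notint y.
Proof. intros [H1 H2] z ->; apply lt_IZR in H1, H2; lia. Qed.

(* The only point of [t + Z] in the open interval (0,1), if any. *)
Definition lattice_point (t : R) : R := t + IZR (up (- t)).

Lemma notint_sub_lattice_point y t : 0 < y < 1 -> y <> lattice_point t -> notint (y - t).
Proof.
  intros Hy Hne z E; apply Hne; unfold lattice_point.
  rewrite <- (tech_up (- t) z); lra.
Qed.

Lemma infinite_unit_interval_avoiding (ts : list R) :
  infinite (fun y => 0 < y < 1 /\ ~ In y (map lattice_point ts)).
Proof. apply infinite_remove, infinite_interval; lra. Qed.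

Lemma sep_poly_eq0_generic D P a0 b0 c0 x0 :
  sep_poly D -> sep_poly P -> D a0 b0 c0 x0 <> 0 ->
  (forall a b c x, standing a b c -> -1 < x < 1 -> D a b c x <> 0 -> P a b c x = 0) ->
  forall a b c x, P a b c x = 0.
Proof.
  intros (D1&D2&D3&D4) (P1&P2&P3&P4) HD HP a b c x.
  revert a; apply (is_poly_eq0_generic _ _ _ a0 (P1 b c x) (D1 b0 c0 x0)
    (infinite_unit_interval_avoiding nil) HD); intros a [Ha _] HDa.
  revert b; apply (is_poly_eq0_generic _ _ _ b0 (P2 a c x) (D2 a c0 x0)
    (infinite_unit_interval_avoiding [a]) HDa); intros b [Hb Hba] HDb.
  revert c; apply (is_poly_eq0_generic _ _ _ c0 (P3 a b x) (D3 a b x0)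
    (infinite_unit_interval_avoiding [a; b; a + b]) HDb); intros c [Hc Hcab] HDc.
  revert x; apply (is_poly_eq0_generic _ _ _ x0 (P4 a b c) (D4 a b c)
    (infinite_interval (-1) 1 ltac:(lra)) HDc); intros x Hx HDx.
  simpl in Hba, Hcab.
  assert (Hlat : forall y t, 0 < y < 1 -> lattice_point t <> y -> notint (y - t))
    by (intros y t Hy Hne; apply notint_sub_lattice_point; auto).
  apply HP; auto; split; [|split; [|split; [|split; [|split; [|split]]]]].
  - apply notint_unit_interval; auto.
  - apply notint_unit_interval; auto.
  - apply Hlat; tauto.
  - apply Hlat; tauto.
  - apply notint_unit_interval; auto.
  - replace (c - a - b) with (c - (a + b)) by ring; apply Hlat; tauto.
  - replace (a - b) with (- (b - a)) by ring; apply notint_opp, Hlat; tauto.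
Qed.

Definition hgc (A B C : R) (n : nat) : R := poch A n * poch B n / (poch C n * INR (fact n)).

Lemma hypF_PSeries A B C x : hypF A B C x = PSeries (hgc A B C) x.
Proof. reflexivity. Qed.

Lemma poch_neq0 A n : notint A -> poch A n <> 0.
Proof.
  intros H; induction n; simpl; [lra|].
  apply Rmult_integral_contrapositive; split; auto; apply notint_add_nat; auto.
Qed.

Lemma poch_S_shift A n : poch A (S n) = A * poch (A + 1) n.
Proof. induction n; simpl in *; [ring|rewrite IHn; destruct n; simpl; ring]. Qed.

Lemma INR_fact_neq0 n : INR (fact n) <> 0.
Proof. apply not_0_INR, fact_neq_0. Qed.

Lemma hgc_0 A B C : hgc A B C 0 = 1.
Proof. unfold hgc; simpl; field. Qed.

Lemma hgc_neq0 A B C n : notint A -> notint B -> notint C -> hgc A B C n <> 0.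
Proof.
  intros HA HB HC; unfold hgc.
  pose proof (poch_neq0 A n HA); pose proof (poch_neq0 B n HB).
  pose proof (poch_neq0 C n HC); pose proof (INR_fact_neq0 n).
  unfold Rdiv; repeat apply Rmult_integral_contrapositive; split; auto.
  apply Rinv_neq_0_compat, Rmult_integral_contrapositive; auto.
Qed.

Lemma hgc_S A B C n : notint C ->
  hgc A B C (S n) = hgc A B C n * ((A + INR n) * (B + INR n)) / ((C + INR n) * (INR n + 1)).
Proof.
  intros HC; unfold hgc.
  pose proof (poch_neq0 C n HC); pose proof (INR_fact_neq0 n).
  pose proof (notint_add_nat C n HC); pose proof (pos_INR n).
  change (fact (S n)) with (S n * fact n)%nat; rewrite mult_INR, S_INR.
  simpl poch; field; repeat split; auto; lra.
Qed.

Lemma hgc_mul_S A B C n : notint C ->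
  hgc A B C (S n) * ((C + INR n) * (INR n + 1)) = hgc A B C n * ((A + INR n) * (B + INR n)).
Proof.
  intros HC; rewrite hgc_S by auto.
  pose proof (notint_add_nat C n HC); pose proof (pos_INR n).
  field; split; auto; lra.
Qed.

(* The coefficients of [F(A+1,B+1,C+1)] are those of [(C/(A B)) F'(A,B,C)]. *)
Lemma hgc_shift A B C n : notint A -> notint B -> notint C ->
  hgc (A + 1) (B + 1) (C + 1) n = C / (A * B) * (INR n + 1) * hgc A B C (S n).
Proof.
  intros HA HB HC; unfold hgc; rewrite !poch_S_shift.
  change (fact (S n)) with (S n * fact n)%nat; rewrite mult_INR, S_INR.
  pose proof (notint_neq0 A HA); pose proof (notint_neq0 B HB); pose proof (notint_neq0 C HC).
  pose proof (poch_neq0 (C + 1) n (notint_add1 C HC)).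
  pose proof (INR_fact_neq0 n); pose proof (pos_INR n).
  field; repeat split; auto; lra.
Qed.

Lemma CV_radius_hgc A B C : notint A -> notint B -> notint C -> CV_radius (hgc A B C) = 1.
Proof.
  intros HA HB HC.
  replace 1 with (/ 1) by field.
  apply CV_radius_finite_DAlembert; [intros; apply hgc_neq0; auto|lra|].
  (* the ratio of consecutive coefficients is [h (1/(n+1))] *)
  set (lin := fun (D e : R) => (D - 1) * e + 1).
  set (h := fun e => Rabs (lin A e * lin B e / lin C e)).
  assert (Hlin : forall D, continuity_pt (lin D) 0).
  { intros D; apply continuity_pt_plus; [apply continuity_pt_mult|];
      try apply continuity_pt_id; apply continuity_pt_const; intros ? ?; reflexivity. }
  assert (Hh : continuity_pt h 0).
  { unfold h; apply continuity_pt_comp with (f1 := fun e => lin A e * lin B e / lin C e).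
    - apply continuity_pt_div; [apply continuity_pt_mult| |unfold lin; lra]; apply Hlin.
    - apply Rcontinuity_abs. }
  assert (Hinv : is_lim_seq (fun n => / (INR n + 1)) 0).
  { assert (H : is_lim_seq (fun n => INR n + 1) p_infty).
    { eapply is_lim_seq_ext; [|apply (proj1 (is_lim_seq_incr_1 INR p_infty) is_lim_seq_INR)].
      intros n; cbv beta; rewrite (S_INR n); auto. }
    apply is_lim_seq_inv in H; [auto|discriminate]. }
  pose proof (is_lim_seq_continuous h _ 0 Hh Hinv) as L.
  replace (h 0) with 1 in L by (unfold h, lin; rewrite <- Rabs_R1 at 1; f_equal; field).
  eapply is_lim_seq_ext; [|apply L]; intros n; unfold h, lin; f_equal.
  rewrite hgc_S by auto.
  pose proof (hgc_neq0 A B C n HA HB HC); pose proof (pos_INR n); pose proof (notint_add_nat C n HC).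
  field; repeat split; auto; lra.
Qed.

Lemma Rabs_lt_CV_radius_hgc A B C x : notint A -> notint B -> notint C -> -1 < x < 1 ->
  Rbar_lt (Rabs x) (CV_radius (hgc A B C)).
Proof. intros; rewrite CV_radius_hgc by auto; simpl; apply Rabs_def1; lra. Qed.

Definition ps_poly_mul (p : list R) (g : nat -> R) (N : nat) : R :=
  sum_lt (S N) (fun i => nth i p 0 * g (N - i)%nat).

Lemma ps_poly_mul_nil g N : ps_poly_mul nil g N = 0.
Proof. apply sum_lt_eq0; intros [|i] _; simpl; ring. Qed.

Lemma ps_poly_mul_cons c p g N :
  ps_poly_mul (c :: p) g N = PS_plus (PS_scal c g) (PS_incr_1 (ps_poly_mul p g)) N.
Proof.
  unfold ps_poly_mul at 1; rewrite sum_lt_Sl, Nat.sub_0_r.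
  destruct N as [|N]; [|reflexivity].
  change (c * g O + sum_lt 0 (fun i => nth (S i) (c :: p) 0 * g (0 - S i)%nat) = c * g O + 0).
  reflexivity.
Qed.

Lemma ps_poly_mul_trunc K p g N : (forall i, (K <= i)%nat -> nth i p 0 = 0) -> (K <= S N)%nat ->
  ps_poly_mul p g N = sum_lt K (fun i => nth i p 0 * g (N - i)%nat).
Proof.
  intros H HK; unfold ps_poly_mul.
  replace (S N) with (K + (S N - K))%nat by lia.
  rewrite sum_lt_add_range, (sum_lt_eq0 (S N - K)); [ring|].
  intros i _; rewrite H; [ring|lia].
Qed.

Lemma CV_radius_ps_poly_mul (r : R) p g :
  Rbar_lt r (CV_radius g) -> Rbar_lt r (CV_radius (ps_poly_mul p g)).
Proof.
  intros H; induction p as [|c p IH].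
  - rewrite (CV_radius_ext _ (fun _ => 0)), CV_radius_const_0; [exact I|apply ps_poly_mul_nil].
  - rewrite (CV_radius_ext _ _ (ps_poly_mul_cons c p g)).
    eapply Rbar_lt_le_trans; [|apply CV_radius_plus].
    apply Rbar_min_case; [|rewrite CV_radius_incr_1; auto].
    destruct (Req_dec c 0) as [->|Hc]; [|rewrite CV_radius_scal; auto].
    rewrite (CV_radius_ext _ (fun _ => 0)), CV_radius_const_0; [exact I|].
    intros n; unfold PS_scal, scal; simpl; unfold mult; simpl; ring.
Qed.

Lemma PSeries_ps_poly_mul p g x : Rbar_lt (Rabs x) (CV_radius g) ->
  PSeries (ps_poly_mul p g) x = horner p x * PSeries g x.
Proof.
  intros H; induction p as [|c p IH].
  - rewrite (PSeries_ext _ (fun _ => 0)), PSeries_const_0; [simpl; ring|apply ps_poly_mul_nil].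
  - rewrite (PSeries_ext _ _ x (ps_poly_mul_cons c p g)), PSeries_plus.
    + rewrite PSeries_scal, PSeries_incr_1, IH; simpl; unfold scal; simpl; unfold mult; simpl; ring.
    + apply ex_pseries_scal; [apply Rmult_comm|apply CV_radius_inside; auto].
    + apply ex_pseries_incr_1, CV_radius_inside, CV_radius_ps_poly_mul; auto.
Qed.

Lemma PSeries_eq0_coef h : Rbar_lt 0 (CV_radius h) ->
  (forall x, -1 < x < 1 -> PSeries h x = 0) -> forall n, h n = 0.
Proof.
  intros Hr H n; apply (PSeries_ext_recip h (fun _ => 0) n Hr).
  - rewrite CV_radius_const_0; exact I.
  - exists (mkposreal 1 Rlt_0_1); intros y Hy.
    change (Rabs (y - 0) < 1) in Hy; rewrite Rminus_0_r in Hy.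
    rewrite PSeries_const_0; apply H; apply Rabs_def2 in Hy; lra.
Qed.

Lemma three_term_coef a b c N : notint a -> notint b -> notint c ->
  ps_poly_mul [c * (c + 1)] (hgc a b c) N =
  ps_poly_mul [0; (a + 1) * (b + 1); - ((a + 1) * (b + 1))] (hgc (a + 1 + 1) (b + 1 + 1) (c + 1 + 1)) N +
  ps_poly_mul [(c + 1) * c; - ((c + 1) * (a + b + 1))] (hgc (a + 1) (b + 1) (c + 1)) N.
Proof.
  intros Ha Hb Hc.
  pose proof (notint_add1 _ Ha) as Ha1; pose proof (notint_add1 _ Hb) as Hb1.
  pose proof (notint_add1 _ Hc) as Hc1; pose proof (notint_add1 _ Hc1) as Hc2.
  pose proof (notint_neq0 _ Ha); pose proof (notint_neq0 _ Hb); pose proof (notint_neq0 _ Hc).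
  pose proof (notint_neq0 _ Ha1); pose proof (notint_neq0 _ Hb1); pose proof (notint_neq0 _ Hc1).
  pose proof (notint_neq0 _ Hc2).
  destruct N as [|[|M]].
  - unfold ps_poly_mul; simpl.
    rewrite !hgc_shift, !hgc_S, hgc_0 by auto; simpl.
    field; repeat split; auto.
  - unfold ps_poly_mul; simpl.
    rewrite !hgc_shift, !hgc_S, hgc_0 by auto; simpl.
    field; repeat split; auto; lra.
  - rewrite (ps_poly_mul_trunc 1), (ps_poly_mul_trunc 3), (ps_poly_mul_trunc 2);
      try lia; try (intros i Hi; apply nth_overflow; simpl; lia).
    simpl sum_lt; simpl nth; rewrite ?Nat.sub_0_r.
    replace (S (S M) - 1)%nat with (S M) by lia; replace (S (S M) - 2)%nat with M by lia.
    rewrite !hgc_shift by auto; repeat rewrite (hgc_S a b c) by auto.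
    pose proof (notint_add_nat c M Hc); pose proof (notint_add_nat c (S M) Hc).
    pose proof (notint_add_nat c (S (S M)) Hc); pose proof (notint_add_nat c (S (S (S M))) Hc).
    pose proof (pos_INR M); rewrite !S_INR in *.
    field; repeat split; auto; lra.
Qed.

(* Comparing coefficients: by [hgc_shift] this is the hypergeometric equation
   [x(1-x) F'' + (c - (a+b+1) x) F' - a b F = 0] multiplied by [c (c+1) / (a b)]. *)
Lemma hypF_three_term a b c x : notint a -> notint b -> notint c -> -1 < x < 1 ->
  c * (c + 1) * hypF a b c x =
  (a + 1) * (b + 1) * (x * (1 - x)) * hypF (a + 1 + 1) (b + 1 + 1) (c + 1 + 1) x +
  (c + 1) * (c - (a + b + 1) * x) * hypF (a + 1) (b + 1) (c + 1) x.
Proof.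
  intros Ha Hb Hc Hx.
  pose proof (notint_add1 _ Ha) as Ha1; pose proof (notint_add1 _ Hb) as Hb1.
  pose proof (notint_add1 _ Hc) as Hc1.
  assert (Hr : forall A B C, notint A -> notint B -> notint C -> Rbar_lt (Rabs x) (CV_radius (hgc A B C)))
    by (intros; apply Rabs_lt_CV_radius_hgc; auto).
  rewrite !hypF_PSeries.
  replace (c * (c + 1)) with (horner [c * (c + 1)] x) by (simpl; ring).
  replace ((a + 1) * (b + 1) * (x * (1 - x))) with
    (horner [0; (a + 1) * (b + 1); - ((a + 1) * (b + 1))] x) by (simpl; ring).
  replace ((c + 1) * (c - (a + b + 1) * x)) with
    (horner [(c + 1) * c; - ((c + 1) * (a + b + 1))] x) by (simpl; ring).
  rewrite <- !PSeries_ps_poly_mul by (apply Hr; auto using notint_add1).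
  rewrite (PSeries_ext _ _ x (fun N => three_term_coef a b c N Ha Hb Hc)).
  apply PSeries_plus; apply CV_radius_inside, CV_radius_ps_poly_mul, Hr; auto using notint_add1.
Qed.

Fixpoint hgc_num_prod (A B : R) (k : nat) (y : R) : R :=
  match k with O => 1 | S k' => (A + y) * (B + y) * hgc_num_prod A B k' (y + 1) end.

Fixpoint hgc_den_prod (C : R) (k : nat) (y : R) : R :=
  match k with O => 1 | S k' => (C + y) * (y + 1) * hgc_den_prod C k' (y + 1) end.

Lemma is_poly_hgc_num_prod A B k : is_poly (hgc_num_prod A B k).
Proof.
  induction k; simpl; [apply is_poly_const|].
  apply is_poly_mul; [is_poly_tac|apply (is_poly_shift _ 1 IHk)].
Qed.

Lemma is_poly_hgc_den_prod C k : is_poly (hgc_den_prod C k).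
Proof.
  induction k; simpl; [apply is_poly_const|].
  apply is_poly_mul; [is_poly_tac|apply (is_poly_shift _ 1 IHk)].
Qed.

Lemma hgc_den_prod_add C k1 k2 y :
  hgc_den_prod C (k1 + k2) y = hgc_den_prod C k1 y * hgc_den_prod C k2 (y + INR k1).
Proof.
  revert y; induction k1; intros y; [cbn [hgc_den_prod Nat.add INR]; rewrite Rplus_0_r; ring|].
  rewrite Nat.add_succ_l; cbn [hgc_den_prod]; rewrite IHk1, S_INR.
  replace (y + 1 + INR k1) with (y + (INR k1 + 1)) by ring; ring.
Qed.

Lemma hgc_den_prod_neq0 C k y :
  (forall j, C + (y + INR j) <> 0) -> (forall j, y + INR j + 1 <> 0) -> hgc_den_prod C k y <> 0.
Proof.
  revert y; induction k; intros y H1 H2; simpl; [lra|].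
  apply Rmult_integral_contrapositive; split; [apply Rmult_integral_contrapositive; split|].
  - specialize (H1 O); simpl in H1; lra.
  - specialize (H2 O); simpl in H2; lra.
  - apply IHk; intros j; [specialize (H1 (S j))|specialize (H2 (S j))]; rewrite S_INR in *; lra.
Qed.

Lemma hgc_add_mul_den A B C k m : notint C ->
  hgc A B C (m + k) * hgc_den_prod C k (INR m) = hgc A B C m * hgc_num_prod A B k (INR m).
Proof.
  intros HC; revert m; induction k; intros m; simpl; [rewrite Nat.add_0_r; ring|].
  replace (m + S k)%nat with (S m + k)%nat by lia.
  pose proof (IHk (S m)) as E; rewrite S_INR in E.
  transitivity (hgc A B C (S m + k) * hgc_den_prod C k (INR m + 1) * ((C + INR m) * (INR m + 1)));
    [ring|rewrite E].
  transitivity (hgc A B C (S m) * ((C + INR m) * (INR m + 1)) * hgc_num_prod A B k (INR m + 1));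
    [ring|rewrite hgc_mul_S by auto; ring].
Qed.

Lemma hgc_add_mul_den_le A B C k D m : notint C -> (k <= D)%nat ->
  hgc A B C (m + k) * hgc_den_prod C D (INR m) =
  hgc A B C m * hgc_num_prod A B k (INR m) * hgc_den_prod C (D - k) (INR m + INR k).
Proof.
  intros HC Hk; replace D with (k + (D - k))%nat at 1 by lia.
  rewrite hgc_den_prod_add, <- (hgc_add_mul_den A B C k m HC); ring.
Qed.

(* [cleared_coef A B C D p q (m+1)] is the coefficient of index [m + D] of
   [p F(A,B,C) + q F(A+1,B+1,C+1)], times [hgc_den_prod C D (m+1) / hgc A B C (m+1)]
   (see [cleared_coef_spec]); unlike that coefficient, it is a polynomial in [m]. *)
Definition cleared_coef A B C D (p q : list R) (y : R) : R :=
  sum_lt D (fun i => nth i p 0 * hgc_num_prod A B (D - 1 - i) y *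
                     hgc_den_prod C (S i) (y + INR (D - 1 - i))) +
  sum_lt (S D) (fun j => nth j q 0 * (C / (A * B)) * (y + INR (D - j)) *
                     hgc_num_prod A B (D - j) y * hgc_den_prod C j (y + INR (D - j))).

Lemma is_poly_cleared_coef A B C D p q : is_poly (cleared_coef A B C D p q).
Proof.
  apply is_poly_add; apply is_poly_sum_lt; intros i.
  - apply is_poly_mul; [apply is_poly_mul; [apply is_poly_const|apply is_poly_hgc_num_prod]|].
    apply is_poly_shift, is_poly_hgc_den_prod.
  - apply is_poly_mul; [apply is_poly_mul; [|apply is_poly_hgc_num_prod]|].
    + apply is_poly_mul; [apply is_poly_const|apply is_poly_add; [apply is_poly_id|apply is_poly_const]].
    + apply is_poly_shift, is_poly_hgc_den_prod.
Qed.

Section Independence.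

Variables (A B C : R) (p q : list R).
Hypotheses (HA : notint A) (HB : notint B) (HC : notint C).

Lemma cleared_coef_spec D m :
  (forall i, (D <= i)%nat -> nth i p 0 = 0) -> (forall j, (S D <= j)%nat -> nth j q 0 = 0) ->
  (ps_poly_mul p (hgc A B C) (m + D) + ps_poly_mul q (hgc (A + 1) (B + 1) (C + 1)) (m + D)) *
    hgc_den_prod C D (INR (S m)) =
  hgc A B C (S m) * cleared_coef A B C D p q (INR (S m)).
Proof.
  intros Hp Hq.
  rewrite (ps_poly_mul_trunc D p), (ps_poly_mul_trunc (S D) q) by (auto; lia).
  unfold cleared_coef.
  rewrite Rmult_plus_distr_r, Rmult_plus_distr_l, !sum_lt_mulr, !sum_lt_mull.
  f_equal; apply sum_lt_ext; intros i Hi.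
  - replace (m + D - i)%nat with (S m + (D - 1 - i))%nat by lia.
    transitivity (nth i p 0 * (hgc A B C (S m + (D - 1 - i)) * hgc_den_prod C D (INR (S m))));
      [ring|].
    rewrite hgc_add_mul_den_le by (auto; lia).
    replace (D - (D - 1 - i))%nat with (S i) by lia; ring.
  - rewrite hgc_shift by auto.
    replace (S (m + D - i)) with (S m + (D - i))%nat by lia.
    replace (INR (m + D - i) + 1) with (INR (S m) + INR (D - i))
      by (rewrite <- plus_INR, <- S_INR; f_equal; lia).
    transitivity (nth i q 0 * (C / (A * B)) * (INR (S m) + INR (D - i)) *
      (hgc A B C (S m + (D - i)) * hgc_den_prod C D (INR (S m)))); [ring|].
    rewrite hgc_add_mul_den_le by (auto; lia).
    replace (D - (D - i))%nat with i by lia; ring.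
Qed.

Hypothesis Hcoef : forall N,
  ps_poly_mul p (hgc A B C) N + ps_poly_mul q (hgc (A + 1) (B + 1) (C + 1)) N = 0.

Lemma cleared_coef_eq0 D :
  (forall i, (D <= i)%nat -> nth i p 0 = 0) -> (forall j, (S D <= j)%nat -> nth j q 0 = 0) ->
  forall y, cleared_coef A B C D p q y = 0.
Proof.
  intros Hp Hq; apply (is_poly_eq0_on_infinite _ _ (is_poly_cleared_coef A B C D p q) (infinite_nat_from 1)).
  intros s [[|m] [Hm ->]]; [lia|].
  pose proof (cleared_coef_spec D m Hp Hq) as E.
  rewrite Hcoef, Rmult_0_l in E; symmetry in E.
  apply Rmult_integral in E as [E|E]; [|auto].
  exfalso; apply (hgc_neq0 A B C (S m)); auto.
Qed.

(* At a root of [hgc_num_prod A B 1] only the two terms of highest index survive. *)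
Lemma cleared_coef_at_root d y :
  (A + y) * (B + y) = 0 ->
  cleared_coef A B C (S d) p q y =
    hgc_den_prod C (S d) y * (nth d p 0 + nth (S d) q 0 * (C / (A * B)) * y).
Proof.
  intros Hy; unfold cleared_coef; rewrite (sum_lt_S (S d)), (sum_lt_S d).
  rewrite (sum_lt_eq0 d), (sum_lt_eq0 (S d)).
  - replace (S d - 1 - d)%nat with O by lia; replace (S d - S d)%nat with O by lia.
    cbn [hgc_num_prod INR]; rewrite !Rplus_0_r; ring.
  - intros j Hj; replace (S d - j)%nat with (S (d - j)) by lia; cbn [hgc_num_prod]; rewrite Hy; ring.
  - intros i Hi; replace (S d - 1 - i)%nat with (S (d - 1 - i)) by lia; cbn [hgc_num_prod]; rewrite Hy; ring.
Qed.

Hypotheses (HCA : notint (C - A)) (HCB : notint (C - B)) (HAB : notint (A - B)).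

Lemma hgc_den_prod_neq0_at_opp D E : notint E -> notint (C - E) -> hgc_den_prod C D (- E) <> 0.
Proof.
  intros HE HCE; apply hgc_den_prod_neq0; intros j.
  - pose proof (notint_add_nat (C - E) j HCE); lra.
  - pose proof (notint_sub_nat E (S j) HE); rewrite S_INR in *; lra.
Qed.

(* Evaluating [cleared_coef] at [y = -A] and [y = -B] gives two independent linear
   equations for the two coefficients of highest index. *)
Lemma top_coefs_eq0 d :
  (forall i, (S d <= i)%nat -> nth i p 0 = 0) -> (forall j, (S (S d) <= j)%nat -> nth j q 0 = 0) ->
  nth d p 0 = 0 /\ nth (S d) q 0 = 0.
Proof.
  intros Hp Hq.
  assert (Hroot : forall E, notint E -> notint (C - E) -> (A - E) * (B - E) = 0 ->
            nth d p 0 + nth (S d) q 0 * (C / (A * B)) * (- E) = 0).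
  { intros E HE HCE HAB0.
    pose proof (cleared_coef_at_root d (- E) HAB0) as Hr.
    rewrite (cleared_coef_eq0 (S d) Hp Hq) in Hr; symmetry in Hr.
    apply Rmult_integral in Hr as [Hr|Hr]; [|auto].
    exfalso; revert Hr; apply hgc_den_prod_neq0_at_opp; auto. }
  pose proof (Hroot A HA HCA ltac:(ring)) as EA.
  pose proof (Hroot B HB HCB ltac:(ring)) as EB.
  assert (Hk : C / (A * B) * (A - B) <> 0).
  { pose proof (notint_neq0 _ HA); pose proof (notint_neq0 _ HB).
    pose proof (notint_neq0 _ HC); pose proof (notint_neq0 _ HAB).
    apply Rmult_integral_contrapositive; split; [|auto].
    unfold Rdiv; apply Rmult_integral_contrapositive; split; [auto|].
    apply Rinv_neq_0_compat, Rmult_integral_contrapositive; auto. }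
  assert (Hq0 : nth (S d) q 0 = 0).
  { apply (Rmult_eq_reg_r (C / (A * B) * (A - B))); [lra|auto]. }
  split; [rewrite Hq0 in EA; lra|auto].
Qed.

Lemma hgc_poly_indep : forall j, nth j q 0 = 0.
Proof.
  assert (Hdown : forall d, (forall i, (d <= i)%nat -> nth i p 0 = 0) ->
            (forall j, (S d <= j)%nat -> nth j q 0 = 0) -> forall j, nth j q 0 = 0).
  { induction d as [|d IH]; intros Hp Hq.
    - assert (Hq0 : nth 0 q 0 = 0).
      { pose proof (Hcoef O) as H0; unfold ps_poly_mul in H0; simpl in H0.
        rewrite !hgc_0, (Hp O) in H0 by lia; lra. }
      intros [|j]; auto; apply Hq; lia.
    - destruct (top_coefs_eq0 d Hp Hq) as [Ep Eq].
      apply IH; [intros i Hi|intros j Hj].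
      + destruct (Nat.eq_dec i d) as [->|]; auto; apply Hp; lia.
      + destruct (Nat.eq_dec j (S d)) as [->|]; auto; apply Hq; lia. }
  apply (Hdown (length p + length q)%nat); intros i Hi; apply nth_overflow; lia.
Qed.

End Independence.

Lemma standing_shift a b c : standing a b c -> standing (a + 1) (b + 1) (c + 1).
Proof.
  intros (Ha&Hb&Hca&Hcb&Hc&Hcab&Hab); unfold standing.
  replace (c + 1 - (a + 1)) with (c - a) by ring; replace (c + 1 - (b + 1)) with (c - b) by ring.
  replace (a + 1 - (b + 1)) with (a - b) by ring.
  repeat split; auto using notint_add1.
  intros z E; apply (Hcab (z + 1)%Z); rewrite plus_IZR; simpl; lra.
Qed.

Notation num_of f := (peval (rnum f)).
Notation den_of f := (peval (rden f)).

Section Contiguity.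

Variables (k l m : Z) (Qf Rf Qf' Rf' : ratfun).
Hypotheses (HQR : contiguous k l m Qf Rf) (HQR' : contiguous (k - 1) (l - 1) (m - 1) Qf' Rf').

Definition den_prod a b c x : R :=
  den_of Qf a b c x * den_of Rf a b c x *
  den_of Qf' (a + 1) (b + 1) (c + 1) x * den_of Rf' (a + 1) (b + 1) (c + 1) x.

(* The numerator of [R(a,b,c) - c (c+1) / ((a+1) (b+1) x (1-x)) * Q'(a+1,b+1,c+1)]. *)
Definition cross_diff a b c x : R :=
  (a + 1) * (b + 1) * (x * (1 - x)) * num_of Rf a b c x * den_of Qf' (a + 1) (b + 1) (c + 1) x -
  c * (c + 1) * num_of Qf' (a + 1) (b + 1) (c + 1) x * den_of Rf a b c x.

(* Coefficients of the relation [coef1 F(a+1,b+1,c+1) + coef2 F(a+2,b+2,c+2) = 0]. *)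
Definition coef1 a b c x : R :=
  c * (c + 1) * num_of Qf a b c x * den_of Rf a b c x *
    den_of Qf' (a + 1) (b + 1) (c + 1) x * den_of Rf' (a + 1) (b + 1) (c + 1) x +
  (c + 1) * (c - (a + b + 1) * x) * num_of Rf a b c x * den_of Qf a b c x *
    den_of Qf' (a + 1) (b + 1) (c + 1) x * den_of Rf' (a + 1) (b + 1) (c + 1) x -
  c * (c + 1) * num_of Rf' (a + 1) (b + 1) (c + 1) x * den_of Qf a b c x *
    den_of Rf a b c x * den_of Qf' (a + 1) (b + 1) (c + 1) x.

Definition coef2 a b c x : R :=
  cross_diff a b c x * den_of Qf a b c x * den_of Rf' (a + 1) (b + 1) (c + 1) x.

Lemma sep_poly_den_prod : sep_poly den_prod.
Proof. unfold den_prod; sep_poly_tac. Qed.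

Lemma sep_poly_cross_diff : sep_poly cross_diff.
Proof. unfold cross_diff; sep_poly_tac. Qed.

Lemma sep_poly_coef1 : sep_poly coef1.
Proof. unfold coef1; sep_poly_tac. Qed.

Lemma sep_poly_coef2 : sep_poly coef2.
Proof. unfold coef2, cross_diff; sep_poly_tac. Qed.

Lemma coef_relation a b c x : standing a b c -> -1 < x < 1 -> den_prod a b c x <> 0 ->
  coef1 a b c x * hypF (a + 1) (b + 1) (c + 1) x +
  coef2 a b c x * hypF (a + 1 + 1) (b + 1 + 1) (c + 1 + 1) x = 0.
Proof.
  intros Hs Hx Hden; destruct HQR as (_&_&E1), HQR' as (_&_&E2).
  unfold den_prod in Hden.
  assert (Hnz : forall u v w z, u * v * w * z <> 0 -> u <> 0 /\ v <> 0 /\ w <> 0 /\ z <> 0)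
    by (intros u v w z H; repeat split; intros ->; apply H; ring).
  destruct (Hnz _ _ _ _ Hden) as (Dq&Dr&Dq'&Dr').
  specialize (E1 a b c x Hs Hx Dq Dr).
  specialize (E2 (a + 1) (b + 1) (c + 1) x (standing_shift a b c Hs) Hx Dq' Dr').
  rewrite !minus_IZR in E2; replace (a + 1 + (IZR k - 1)) with (a + IZR k) in E2 by ring;
  replace (b + 1 + (IZR l - 1)) with (b + IZR l) in E2 by ring;
  replace (c + 1 + (IZR m - 1)) with (c + IZR m) in E2 by ring.
  destruct Hs as (Ha&Hb&_&_&Hc&_).
  pose proof (hypF_three_term a b c x Ha Hb Hc Hx) as E3.
  unfold reval in E1, E2; unfold coef1, coef2, cross_diff.
  set (F0 := hypF a b c x) in *; set (F1 := hypF (a + 1) (b + 1) (c + 1) x) in *;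
  set (F2 := hypF (a + 1 + 1) (b + 1 + 1) (c + 1 + 1) x) in *.
  set (nq := num_of Qf a b c x) in *; set (dq := den_of Qf a b c x) in *;
  set (nr := num_of Rf a b c x) in *; set (dr := den_of Rf a b c x) in *;
  set (nq' := num_of Qf' (a + 1) (b + 1) (c + 1) x) in *;
  set (dq' := den_of Qf' (a + 1) (b + 1) (c + 1) x) in *;
  set (nr' := num_of Rf' (a + 1) (b + 1) (c + 1) x) in *;
  set (dr' := den_of Rf' (a + 1) (b + 1) (c + 1) x) in *.
  assert (Z1 : nq / dq * F1 + nr / dr * F0 - (nq' / dq' * F2 + nr' / dr' * F1) = 0) by lra.
  assert (Z2 : (a + 1) * (b + 1) * (x * (1 - x)) * F2 + (c + 1) * (c - (a + b + 1) * x) * F1 -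
                 c * (c + 1) * F0 = 0) by lra.
  transitivity (c * (c + 1) * (dq * dr * dq' * dr') *
      (nq / dq * F1 + nr / dr * F0 - (nq' / dq' * F2 + nr' / dr' * F1)) +
    nr * dq * dq' * dr' * ((a + 1) * (b + 1) * (x * (1 - x)) * F2 +
      (c + 1) * (c - (a + b + 1) * x) * F1 - c * (c + 1) * F0)).
  - field; auto.
  - rewrite Z1, Z2; ring.
Qed.

Lemma cross_diff_eq0_generic a b c x : standing a b c -> -1 < x < 1 -> den_prod a b c x <> 0 ->
  cross_diff a b c x = 0.
Proof.
  intros Hs Hx Hden.
  pose proof (standing_shift a b c Hs) as (HA&HB&HCA&HCB&HC&_&HAB).
  destruct sep_poly_coef1 as (_&_&_&U), sep_poly_coef2 as (_&_&_&V), sep_poly_den_prod as (_&_&_&E).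
  destruct (is_poly_mul _ _ (U a b c) (E a b c)) as [pu Hpu].
  destruct (is_poly_mul _ _ (V a b c) (E a b c)) as [pv Hpv].
  set (g1 := hgc (a + 1) (b + 1) (c + 1)); set (g2 := hgc (a + 1 + 1) (b + 1 + 1) (c + 1 + 1)).
  assert (Hr : forall g, g = g1 \/ g = g2 -> forall y, -1 < y < 1 -> Rbar_lt (Rabs y) (CV_radius g))
    by (intros g [->| ->] y Hy; apply Rabs_lt_CV_radius_hgc; auto using notint_add1).
  (* after multiplication by [den_prod] the relation holds on the whole disc *)
  assert (Hseries : forall y, -1 < y < 1 ->
            PSeries (PS_plus (ps_poly_mul pu g1) (ps_poly_mul pv g2)) y = 0).
  { intros y Hy; rewrite PSeries_plus by (apply CV_radius_inside, CV_radius_ps_poly_mul, Hr; auto).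
    rewrite !PSeries_ps_poly_mul by (apply Hr; auto).
    rewrite <- Hpu, <- Hpv; unfold g1, g2; rewrite <- !hypF_PSeries.
    destruct (Req_dec (den_prod a b c y) 0) as [E0|E0]; [rewrite E0; ring|].
    transitivity (den_prod a b c y * (coef1 a b c y * hypF (a + 1) (b + 1) (c + 1) y +
                    coef2 a b c y * hypF (a + 1 + 1) (b + 1 + 1) (c + 1 + 1) y)); [ring|].
    rewrite coef_relation by auto; ring. }
  assert (Hrad : Rbar_lt 0 (CV_radius (PS_plus (ps_poly_mul pu g1) (ps_poly_mul pv g2)))).
  { eapply Rbar_lt_le_trans; [|apply CV_radius_plus].
    apply Rbar_min_case; apply CV_radius_ps_poly_mul;
      unfold g1, g2; rewrite CV_radius_hgc by auto using notint_add1; simpl; lra. }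
  pose proof (hgc_poly_indep (a + 1) (b + 1) (c + 1) pu pv HA HB HC
    (PSeries_eq0_coef _ Hrad Hseries) HCA HCB HAB) as Hpv0.
  pose proof (horner_eq0_of_nth pv Hpv0 x) as Hv; rewrite <- Hpv in Hv.
  apply Rmult_integral in Hv as [Hv|Hv]; [|contradiction].
  unfold coef2, den_prod in *.
  apply Rmult_integral in Hv as [Hv|Hv]; [apply Rmult_integral in Hv as [Hv|Hv]|]; auto;
    exfalso; apply Hden; rewrite Hv; ring.
Qed.

Lemma den_prod_neq0_somewhere : exists a b c x, den_prod a b c x <> 0.
Proof.
  destruct HQR as ((q1&q2&q3&q4&Hq) & (r1&r2&r3&r4&Hr) & _).
  destruct HQR' as ((s1&s2&s3&s4&Hs) & (t1&t2&t3&t4&Ht) & _).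
  assert (Hshift : forall f, sep_poly (fun a b c x => den_of f (a + 1) (b + 1) (c + 1) x))
    by (intros; sep_poly_tac).
  assert (Hback : forall f a b c x, den_of f a b c x <> 0 ->
            den_of f (a - 1 + 1) (b - 1 + 1) (c - 1 + 1) x <> 0)
    by (intros f a b c x; replace (a - 1 + 1) with a by ring;
        replace (b - 1 + 1) with b by ring; replace (c - 1 + 1) with c by ring; auto).
  destruct (sep_poly_mul_neq0 _ _ q1 q2 q3 q4 r1 r2 r3 r4
    (sep_poly_peval _) (sep_poly_peval _) Hq Hr) as (e1&e2&e3&e4&H1).
  destruct (sep_poly_mul_neq0 _ _ e1 e2 e3 e4 (s1 - 1) (s2 - 1) (s3 - 1) s4
    (sep_poly_mul _ _ (sep_poly_peval _) (sep_poly_peval _)) (Hshift Qf') H1 (Hback _ _ _ _ _ Hs))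
    as (f1&f2&f3&f4&H2).
  destruct (sep_poly_mul_neq0 _ _ f1 f2 f3 f4 (t1 - 1) (t2 - 1) (t3 - 1) t4
    (sep_poly_mul _ _ (sep_poly_mul _ _ (sep_poly_peval _) (sep_poly_peval _)) (Hshift Qf'))
    (Hshift Rf') H2 (Hback _ _ _ _ _ Ht)) as (h1&h2&h3&h4&H3).
  exists h1, h2, h3, h4; exact H3.
Qed.

Lemma cross_diff_eq0 a b c x : cross_diff a b c x = 0.
Proof.
  destruct den_prod_neq0_somewhere as (a0&b0&c0&x0&H0).
  exact (sep_poly_eq0_generic _ _ a0 b0 c0 x0 sep_poly_den_prod sep_poly_cross_diff H0
           cross_diff_eq0_generic a b c x).
Qed.

End Contiguity.

Theorem proposition1p3 :
  forall (k l m : Z) (Qf Rf Qf' Rf' : ratfun),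
    contiguous k l m Qf Rf ->
    contiguous (k - 1) (l - 1) (m - 1) Qf' Rf' ->
    forall a b c x : R,
      rdefined Rf a b c x ->
      rdefined Qf' (a + 1) (b + 1) (c + 1) x ->
      a + 1 <> 0 -> b + 1 <> 0 -> x <> 0 -> 1 - x <> 0 ->
      reval Rf a b c x =
        c * (c + 1) / ((a + 1) * (b + 1) * x * (1 - x)) *
          reval Qf' (a + 1) (b + 1) (c + 1) x.
Proof.
  intros k l m Qf Rf Qf' Rf' HQR HQR' a b c x HR HQ' Ha Hb Hx Hx1.
  unfold rdefined in HR, HQ'.
  assert (Hdiff : reval Rf a b c x -
      c * (c + 1) / ((a + 1) * (b + 1) * x * (1 - x)) * reval Qf' (a + 1) (b + 1) (c + 1) x =
    cross_diff Rf Qf' a b c x /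
      ((a + 1) * (b + 1) * x * (1 - x) * den_of Rf a b c x * den_of Qf' (a + 1) (b + 1) (c + 1) x))
    by (unfold reval, cross_diff; field; repeat split; auto).
  rewrite (cross_diff_eq0 k l m Qf Rf Qf' Rf' HQR HQR'), Rdiv_0_l in Hdiff; lra.
Qed.
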